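(* Let $T\in\mathbb R^{m\times n}$ be injective and satisfy the positive cone condition, and $y\in\mathbb R^m$. Then for every $\lambda>0$, $$|x_\mu^i|\le|x_\lambda^i|\qquad\text{for all }i\in I(\lambda)\text{ and all }0<\mu\le\lambda.$$
   Context: For $\lambda>0$, $x_\lambda$ is the unique minimizer of $x\mapsto\frac{\lambda}{2}\|Tx-y\|_2^2+\|x\|_1$ on $\mathbb R^n$; $I(\lambda)=\{i:x_\lambda^i\ne0\}$. Positive cone condition: for every nonempty $J\subset\{1,\dots,n\}$, with $T^J$ the submatrix of columns indexed by $J$ and $S_J=((T^J)^TT^J)^{-1}$, one has $(S_J)_{i,i}-\sum_{j\ne i}|(S_J)_{i,j}|\ge0$ for all $i\in J$. *)

From HB Require Import structures.
From mathcomp Require Import all_boot all_order all_algebra.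
From mathcomp Require Import reals.
Set Implicit Arguments. Unset Strict Implicit. Unset Printing Implicit Defensive.
Import Order.TTheory GRing.Theory Num.Theory.
Local Open Scope ring_scope.

Definition lasso_obj (R : realType) (m n : nat) (T : 'M[R]_(m, n)) (y : 'cV[R]_m)
    (lam : R) (x : 'cV[R]_n) : R :=
  lam / 2 * (\sum_(i < m) ((T *m x - y) i 0) ^+ 2) + \sum_(j < n) `|x j 0|.

Definition is_lasso_minimizer (R : realType) (m n : nat) (T : 'M[R]_(m, n))
    (y : 'cV[R]_m) (lam : R) (x : 'cV[R]_n) : Prop :=
  forall z : 'cV[R]_n, lasso_obj T y lam x <= lasso_obj T y lam z.

(* T^J : the submatrix of the columns of T indexed by J (in increasing order) *)
Definition col_submx (R : realType) (m n : nat) (T : 'M[R]_(m, n)) (J : {set 'I_n}) :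
    'M[R]_(m, #|J|) :=
  colsub (fun k : 'I_#|J| => enum_val k) T.

Definition S_of (R : realType) (m n : nat) (T : 'M[R]_(m, n)) (J : {set 'I_n}) :
    'M[R]_#|J| :=
  invmx ((col_submx T J)^T *m col_submx T J).

Definition positive_cone_condition (R : realType) (m n : nat) (T : 'M[R]_(m, n)) : Prop :=
  forall J : {set 'I_n}, J != set0 ->
    forall k : 'I_#|J|,
      0 <= S_of T J k k - \sum_(l < #|J| | l != k) `|S_of T J k l|.

From HB Require Import structures.
From mathcomp Require Import all_boot all_order all_algebra.
From mathcomp Require Import reals.
From mathcomp Require Import ring lra.
Set Implicit Arguments. Unset Strict Implicit. Unset Printing Implicit Defensive.
Import Order.TTheory GRing.Theory Num.Theory.
Local Open Scope ring_scope.

(* Put t = 1/lam, G = T^T T and g(x) = T^T y - G x.  The lasso minimizer for lam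
   is characterised by the KKT conditions  |g(x)_j| <= t  and  g(x)_j x_j = t |x_j|
   (necessity by one-coordinate perturbations, sufficiency and uniqueness by
   expanding the quadratic and using that T is injective).  Writing sol t for the
   minimizer with parameter 1/t, the theorem says that sol t dominates sol s
   for t <= s: every coordinate keeps its sign and shrinks in absolute value.

   Let a be the KKT point for t, with support J, let M_J be the inverse Gram
   matrix of the columns J padded by zeros, and d = M_J sgn(a).  Then
   a - (r - t) d is the KKT point for r as long as no coordinate has changed
   sign: on J this is linear algebra, outside J it needs |(G d)_k| <= 1, which
   follows from the diagonal dominance of M_(J u {k}) (the positive cone
   condition).  The same dominance gives sgn(a_i) d_i >= 0, so coordinates
   shrink along the segment.  If a coordinate reaches 0 before s we stop at the
   first such r, where the support is strictly smaller, and conclude by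
   induction on the size of the support. *)

Lemma dotE (R : pzRingType) k (u v : 'cV[R]_k) : (u^T *m v) 0 0 = \sum_i u i 0 * v i 0.
Proof. by rewrite !mxE; apply: eq_bigr => i _; rewrite mxE. Qed.

Lemma sqnorm_eq0 (R : realDomainType) k (v : 'cV[R]_k) : \sum_i v i 0 ^+ 2 = 0 -> v = 0.
Proof.
move=> v0; apply/matrixP => i j; rewrite ord1 [RHS]mxE.
have := psumr_eq0P (fun i _ => sqr_ge0 (v i 0)) v0.
by move=> /(_ i isT) /eqP; rewrite sqrf_eq0 => /eqP.
Qed.

Section RealFacts.
Variable R : realFieldType.

Lemma normr_sg_le1 (x : R) : `|Num.sg x| <= 1.
Proof. by rewrite normr_sg; case: (x != 0). Qed.

Lemma normr_sg1 (x : R) : x != 0 -> `|Num.sg x| = 1.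
Proof. by move=> x0; rewrite normr_sg x0. Qed.

Lemma sg_sqr1 (x : R) : x != 0 -> Num.sg x * Num.sg x = 1.
Proof. by move=> x0; rewrite -expr2 sqr_sg x0. Qed.

(* A quantity bounded by arbitrarily small multiples of C >= 0 is nonpositive;
   this is how first-order conditions are extracted from perturbations. *)
Lemma le0_of_small_multiples (a C : R) :
  0 <= C -> (forall e, 0 < e -> e < 1 -> a <= e * C) -> a <= 0.
Proof.
move=> C0 small; rewrite leNgt; apply/negP => a0.
have D0 : 0 < C + a + 1 by lra.
have e0 : 0 < a / (C + a + 1) by rewrite divr_gt0.
have e1 : a / (C + a + 1) < 1 by rewrite ltr_pdivrMr // mul1r; lra.
have := small _ e0 e1; rewrite mulrAC ler_pdivlMr //.
nra.
Qed.

Lemma same_sign_trans (a b c : R) :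
  0 <= a * b -> 0 <= b * c -> `|c| <= `|b| -> 0 <= a * c.
Proof.
move=> ab bc cb; have [b0|b0] := eqVneq b 0.
  by move: cb; rewrite b0 normr0 normr_le0 => /eqP ->; rewrite mulr0.
have b2 : 0 < b ^+ 2 by rewrite exprn_even_gt0.
have : 0 <= (a * b) * (b * c) by apply: mulr_ge0.
have -> : a * b * (b * c) = (a * c) * b ^+ 2 by ring.
by rewrite pmulr_lge0.
Qed.

End RealFacts.

Section Embedding.
Variables (R : pzRingType) (n : nat).

Definition embed (J : {set 'I_n}) : 'M[R]_(n, #|J|) :=
  \matrix_(i, k) (i == enum_val k)%:R.

Lemma embed_orth J : (embed J)^T *m embed J = 1%:M.
Proof.
apply/matrixP => p q; rewrite !mxE (bigD1 (enum_val p)) //= big1 ?addr0.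
  by rewrite !mxE eqxx mul1r (inj_eq enum_val_inj) eq_sym.
by move=> j /negbTE jp; rewrite !mxE jp mul0r.
Qed.

Lemma embed_tr_entry J (v : 'cV[R]_n) k : ((embed J)^T *m v) k 0 = v (enum_val k) 0.
Proof.
rewrite mxE (bigD1 (enum_val k)) //= big1 ?addr0; first by rewrite !mxE eqxx mul1r.
by move=> j /negbTE jk; rewrite !mxE jk mul0r.
Qed.

Lemma embed_restrict (J : {set 'I_n}) (z : 'cV[R]_n) :
  (forall i, i \notin J -> z i 0 = 0) -> embed J *m ((embed J)^T *m z) = z.
Proof.
move=> zJ; apply/matrixP => i k; rewrite ord1 mxE.
have [iJ|niJ] := boolP (i \in J).
  rewrite (bigD1 (enum_rank_in iJ i)) //= big1 ?addr0.
    by rewrite embed_tr_entry enum_rankK_in // mxE enum_rankK_in // eqxx mul1r.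
  move=> p pi; rewrite mxE; case: eqP => [ip|]; last by rewrite mul0r.
  by move: pi; rewrite -(inj_eq enum_val_inj) enum_rankK_in // -ip eqxx.
rewrite zJ // big1 // => p _; rewrite mxE; case: eqP => [ip|]; last by rewrite mul0r.
by move: niJ; rewrite ip enum_valP.
Qed.

End Embedding.

Arguments embed {R n} J.

Section Lasso.
Variables (R : realType) (m n : nat) (T : 'M[R]_(m, n)) (y : 'cV[R]_m).

Definition gram : 'M[R]_n := T^T *m T.

(* The correlation of the residual with the columns, g(x) = T^T (y - T x);
   it is minus the gradient of the quadratic part (divided by lam). *)
Definition corr (x : 'cV[R]_n) : 'cV[R]_n := T^T *m y - gram *m x.

Definition col_sqnorm (j : 'I_n) : R := \sum_i T i j ^+ 2.

Lemma col_sqnorm_ge0 j : 0 <= col_sqnorm j.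
Proof. by apply: sumr_ge0 => i _; apply: sqr_ge0. Qed.

Lemma cross_term (x z : 'cV[R]_n) :
  \sum_i (T *m x - y) i 0 * (T *m z) i 0 = - \sum_j corr x j 0 * z j 0.
Proof.
rewrite -[LHS]dotE mulmxA.
have -> : (T *m x - y)^T *m T = (T^T *m (T *m x - y))^T by rewrite trmx_mul trmxK.
rewrite dotE -sumrN; apply: eq_bigr => j _.
rewrite /corr /gram mulmxBr mulmxA !mxE; ring.
Qed.

Lemma obj_expand lam (x z : 'cV[R]_n) :
  lasso_obj T y lam (x + z) = lasso_obj T y lam x - lam * (\sum_j corr x j 0 * z j 0)
   + lam / 2 * (\sum_i ((T *m z) i 0) ^+ 2) + \sum_j (`|x j 0 + z j 0| - `|x j 0|).
Proof.
rewrite /lasso_obj.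
have -> : \sum_i ((T *m (x + z) - y) i 0) ^+ 2 =
   \sum_i ((T *m x - y) i 0) ^+ 2 + 2 * (\sum_i (T *m x - y) i 0 * (T *m z) i 0)
   + \sum_i ((T *m z) i 0) ^+ 2.
  by rewrite mulr_sumr -!big_split /=; apply: eq_bigr => i _; rewrite mulmxDr !mxE; ring.
have -> : \sum_j `|(x + z) j 0| = \sum_j `|x j 0| + \sum_j (`|x j 0 + z j 0| - `|x j 0|).
  by rewrite -big_split /=; apply: eq_bigr => j _; rewrite mxE; ring.
by rewrite cross_term; field.
Qed.

Lemma coord_variation lam (x : 'cV[R]_n) j : is_lasso_minimizer T y lam x ->
  forall h, 0 <= - lam * (h * corr x j 0) + lam / 2 * (h ^+ 2 * col_sqnorm j)
                 + (`|x j 0 + h| - `|x j 0|).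
Proof.
move=> xmin h; pose e : 'cV[R]_n := delta_mx j 0.
have := xmin (x + h *: e); rewrite obj_expand.
have -> : \sum_k corr x k 0 * (h *: e) k 0 = h * corr x j 0.
  rewrite (bigD1 j) //= big1 ?addr0 => [|k /negbTE kj]; last by rewrite !mxE kj !mulr0.
  by rewrite !mxE !eqxx mulr1 mulrC.
have -> : \sum_i ((T *m (h *: e)) i 0) ^+ 2 = h ^+ 2 * col_sqnorm j.
  rewrite mulr_sumr; apply: eq_bigr => i _.
  by rewrite -scalemxAr -colE !mxE; ring.
have -> : \sum_k (`|x k 0 + (h *: e) k 0| - `|x k 0|) = `|x j 0 + h| - `|x j 0|.
  rewrite (bigD1 j) //= big1 ?addr0; first by rewrite !mxE !eqxx mulr1.
  by move=> k /negbTE kj; rewrite !mxE kj mulr0 addr0 subrr.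
lra.
Qed.

Definition kkt (t : R) (x : 'cV[R]_n) : Prop :=
  forall j, `|corr x j 0| <= t /\ corr x j 0 * x j 0 = t * `|x j 0|.

Lemma minimizer_corr_bound lam (x : 'cV[R]_n) j : 0 < lam ->
  is_lasso_minimizer T y lam x -> lam * `|corr x j 0| <= 1.
Proof.
move=> lam0 xmin; set g := corr x j 0; set C := col_sqnorm j.
have C0 : 0 <= C := col_sqnorm_ge0 j.
rewrite -subr_le0; apply: (@le0_of_small_multiples _ _ (lam / 2 * C)).
  by rewrite mulr_ge0 // divr_ge0 // ltW.
move=> e e0 e1; have := coord_variation j xmin (e * Num.sg g).
have dnorm : `|x j 0 + e * Num.sg g| - `|x j 0| <= e.
  have := ler_normD (x j 0) (e * Num.sg g); rewrite normrM gtr0_norm //.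
  have := normr_sg_le1 g; nra.
have dsq : (e * Num.sg g) ^+ 2 <= e ^+ 2.
  by rewrite exprMn sqr_sg; case: (g != 0); rewrite ?mulr1 ?mulr0 ?sqr_ge0.
have dquad : lam / 2 * ((e * Num.sg g) ^+ 2 * C) <= lam / 2 * (e ^+ 2 * C).
  by apply: ler_wpM2l; [rewrite divr_ge0 ?ltW | apply: ler_wpM2r].
rewrite -[e * Num.sg g * g]mulrA -normrEsg -/C => var.
have : 0 <= e * (- lam * `|g| + lam / 2 * e * C + 1).
  have -> : e * (- lam * `|g| + lam / 2 * e * C + 1) =
    - lam * (e * `|g|) + lam / 2 * (e ^+ 2 * C) + e by ring.
  lra.
by rewrite pmulr_rge0 // => pos; nra.
Qed.

(* Second half: on the support, the correlation is at least |x_j| / lam in the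
   direction of x_j (shrinking x_j towards 0 must not pay off). *)
Lemma minimizer_corr_support lam (x : 'cV[R]_n) j : 0 < lam ->
  is_lasso_minimizer T y lam x -> `|x j 0| <= lam * (corr x j 0 * x j 0).
Proof.
move=> lam0 xmin; set g := corr x j 0; set C := col_sqnorm j.
have C0 : 0 <= C := col_sqnorm_ge0 j.
rewrite -subr_le0; apply: (@le0_of_small_multiples _ _ (lam / 2 * (x j 0 ^+ 2 * C))).
  by apply: mulr_ge0; [rewrite divr_ge0 ?ltW | rewrite mulr_ge0 ?sqr_ge0].
move=> e e0 e1; have := coord_variation j xmin (- (e * x j 0)).
have -> : `|x j 0 + - (e * x j 0)| = (1 - e) * `|x j 0|.
  by rewrite -{1}[x j 0]mul1r -mulrBl normrM ger0_norm // subr_ge0 ltW.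
rewrite -/C => var.
have : 0 <= e * (lam * (g * x j 0) + lam / 2 * e * (x j 0 ^+ 2 * C) - `|x j 0|).
  have -> : e * (lam * (g * x j 0) + lam / 2 * e * (x j 0 ^+ 2 * C) - `|x j 0|) =
     - lam * (- (e * x j 0) * g) + lam / 2 * ((- (e * x j 0)) ^+ 2 * C)
     + ((1 - e) * `|x j 0| - `|x j 0|) by ring.
  exact: var.
by rewrite pmulr_rge0 // => pos; nra.
Qed.

Lemma minimizer_kkt lam (x : 'cV[R]_n) : 0 < lam -> is_lasso_minimizer T y lam x ->
  kkt lam^-1 x.
Proof.
move=> lam0 xmin j; set g := corr x j 0.
have bound := minimizer_corr_bound j lam0 xmin.
have active := minimizer_corr_support j lam0 xmin.
split; first by rewrite -[X in _ <= X]mul1r ler_pdivlMr // mulrC.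
have upper : lam * (g * x j 0) <= `|x j 0|.
  have : lam * (g * x j 0) <= (lam * `|g|) * `|x j 0|.
    by rewrite -mulrA ler_pM2l // -normrM ler_norm.
  have : (lam * `|g|) * `|x j 0| <= `|x j 0| by apply: ler_piMl.
  lra.
have E : lam * (g * x j 0) = `|x j 0| by apply/eqP; rewrite eq_le active upper.
by rewrite -E mulrA mulVf ?mul1r // gt_eqF.
Qed.

Hypothesis T_inj : injective (@mulmx R m n 1 T).

(* Conversely, a KKT point for t is a minimizer for 1/t; together with
   injectivity of T this makes every minimizer equal to it. *)
Lemma kkt_minimizer_unique t (c x : 'cV[R]_n) : 0 < t -> kkt t c ->
  is_lasso_minimizer T y t^-1 x -> x = c.
Proof.
move=> t0 ckkt xmin.
have lam0 : 0 < t^-1 by rewrite invr_gt0.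
have := xmin c; rewrite -[x](addrNK c) addrC obj_expand.
set z := x - c.
have l1_gain : 0 <= \sum_j (`|c j 0 + z j 0| - `|c j 0|)
                    - t^-1 * \sum_j corr c j 0 * z j 0.
  rewrite mulr_sumr -sumrB; apply: sumr_ge0 => j _.
  have [gb gc] := ckkt j; set u := t^-1 * corr c j 0.
  have u1 : `|u| <= 1 by rewrite normrM gtr0_norm // ler_pdivrMl // mulr1.
  have uc : u * c j 0 = `|c j 0| by rewrite /u -mulrA gc mulrA mulVf ?mul1r // gt_eqF.
  have : u * (c j 0 + z j 0) <= `|c j 0 + z j 0|.
    by apply: le_trans (ler_norm _) _; rewrite normrM; apply: ler_piMl.
  rewrite mulrDr uc /u; lra.
have q0 : 0 <= \sum_i ((T *m z) i 0) ^+ 2 by apply: sumr_ge0 => i _; apply: sqr_ge0.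
move=> cmin.
have qz : \sum_i ((T *m z) i 0) ^+ 2 = 0.
  apply/eqP; rewrite eq_le q0 andbT.
  have : t^-1 / 2 * \sum_i ((T *m z) i 0) ^+ 2 <= 0 by lra.
  by rewrite pmulr_rle0 // divr_gt0.
have Tz0 : T *m z = T *m 0 by rewrite mulmx0; apply: sqnorm_eq0.
by rewrite (T_inj Tz0) addr0.
Qed.

Lemma col_submx_embed J : col_submx T J = T *m embed J.
Proof.
apply/matrixP => i k; rewrite !mxE (bigD1 (enum_val k)) //= big1 ?addr0.
  by rewrite mxE eqxx mulr1.
by move=> j /negbTE jk; rewrite mxE jk mulr0.
Qed.

Lemma gram_sub_unit J : (col_submx T J)^T *m col_submx T J \in unitmx.
Proof.
rewrite col_submx_embed; set A := T *m embed J.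
rewrite unitmxE unitfE; apply/negP => /det0P [v v0 vA].
have Av0 : A *m v^T = 0.
  apply: sqnorm_eq0; under eq_bigr do rewrite expr2.
  by rewrite -dotE trmx_mul trmxK mulmxA -(mulmxA v) vA mul0mx mxE.
have Ev0 : embed J *m v^T = 0 by apply: T_inj; rewrite mulmx0 mulmxA.
have vT0 : v^T = 0 by rewrite -[v^T]mul1mx -embed_orth -mulmxA Ev0 mulmx0.
by move: v0; rewrite -[v]trmxK vT0 trmx0 eqxx.
Qed.

Definition inv_gram_on (J : {set 'I_n}) : 'M[R]_n := embed J *m S_of T J *m (embed J)^T.

Lemma inv_gram_on_entry J i l : inv_gram_on J i l =
  \sum_q (\sum_p (i == enum_val p)%:R * S_of T J p q) * (l == enum_val q)%:R.
Proof.
rewrite !mxE; apply: eq_bigr => q _; rewrite !mxE; congr (_ * _).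
by apply: eq_bigr => p _; rewrite mxE.
Qed.

Lemma inv_gram_on_row0 (J : {set 'I_n}) i l : i \notin J -> inv_gram_on J i l = 0.
Proof.
move=> ni; rewrite inv_gram_on_entry big1 // => q _; rewrite big1 ?mul0r // => p _.
by case: eqP => [ip|]; [move: ni; rewrite ip enum_valP | rewrite mul0r].
Qed.

Lemma inv_gram_on_col0 (J : {set 'I_n}) i l : l \notin J -> inv_gram_on J i l = 0.
Proof.
move=> nl; rewrite inv_gram_on_entry big1 // => q _.
by case: eqP => [lq|]; [move: nl; rewrite lq enum_valP | rewrite mulr0].
Qed.

Lemma inv_gram_on_enum J p q : inv_gram_on J (enum_val p) (enum_val q) = S_of T J p q.
Proof.
rewrite inv_gram_on_entry (bigD1 q) //= eqxx mulr1 [X in _ + X]big1 ?addr0.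
  rewrite (bigD1 p) //= eqxx mul1r big1 ?addr0 //.
  by move=> p' /negbTE pp; rewrite (inj_eq enum_val_inj) eq_sym pp mul0r.
by move=> q' /negbTE qq; rewrite (inj_eq enum_val_inj) eq_sym qq mulr0.
Qed.

Lemma embed_gram J : (embed J)^T *m T^T *m T *m embed J = (col_submx T J)^T *m col_submx T J.
Proof. by rewrite col_submx_embed trmx_mul !mulmxA. Qed.

Lemma gram_inv_gram_on (J : {set 'I_n}) (w : 'cV[R]_n) i : i \in J ->
  (gram *m (inv_gram_on J *m w)) i 0 = w i 0.
Proof.
move=> iJ.
have E : (embed J)^T *m (gram *m (inv_gram_on J *m w)) = (embed J)^T *m w.
  by rewrite /inv_gram_on /gram !mulmxA embed_gram /S_of mulmxV ?gram_sub_unit // mul1mx.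
move/(congr1 (fun M : 'cV[R]_#|J| => M (enum_rank_in iJ i) 0)): E.
by rewrite !embed_tr_entry enum_rankK_in.
Qed.

Lemma inv_gram_on_gram (J : {set 'I_n}) (z : 'cV[R]_n) :
  (forall i, i \notin J -> z i 0 = 0) -> inv_gram_on J *m (gram *m z) = z.
Proof.
move=> zJ; rewrite -{1}(embed_restrict zJ) /inv_gram_on /gram !mulmxA.
have -> : embed J *m S_of T J *m (embed J)^T *m T^T *m T *m embed J =
   embed J *m (S_of T J *m ((embed J)^T *m T^T *m T *m embed J)) by rewrite !mulmxA.
by rewrite embed_gram /S_of mulVmx ?gram_sub_unit // mulmx1 -mulmxA embed_restrict.
Qed.

Hypothesis T_pcc : positive_cone_condition T.

Lemma inv_gram_on_dominant (J : {set 'I_n}) k : k \in J ->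
  0 <= inv_gram_on J k k - \sum_(l | l != k) `|inv_gram_on J k l|.
Proof.
move=> kJ.
have J0 : J != set0 by apply/set0Pn; exists k.
have := T_pcc J0 (enum_rank_in kJ k); set p := enum_rank_in kJ k.
have kp : k = enum_val p by rewrite /p enum_rankK_in.
have -> : \sum_(l | l != k) `|inv_gram_on J k l| = \sum_(q < #|J| | q != p) `|S_of T J p q|.
  rewrite (bigID (fun l => l \in J)) /= [X in _ + X]big1 ?addr0; last first.
    by move=> l /andP [_ nl]; rewrite inv_gram_on_col0 // normr0.
  rewrite (eq_bigl (fun l => (l \in J) && (l != k))); last by move=> l; rewrite andbC.
  rewrite big_enum_val_cond; apply: eq_big => q; first by rewrite kp (inj_eq enum_val_inj).
  by rewrite kp inv_gram_on_enum.
by rewrite kp inv_gram_on_enum.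
Qed.

(* M_J has a positive diagonal on J: by dominance a zero diagonal entry would
   kill the whole row, contradicting M_J G e_k = e_k. *)
Lemma inv_gram_on_diag_gt0 (J : {set 'I_n}) k : k \in J -> 0 < inv_gram_on J k k.
Proof.
move=> kJ; have dom := inv_gram_on_dominant kJ.
have off0 : 0 <= \sum_(l | l != k) `|inv_gram_on J k l| by apply: sumr_ge0.
rewrite lt_def; apply/andP; split; last by lra.
apply/negP => /eqP kk0.
have row0 : forall l, inv_gram_on J k l = 0.
  have : \sum_(l | l != k) `|inv_gram_on J k l| = 0 by lra.
  move=> off l; have [->//|lk] := eqVneq l k.
  by apply/normr0_eq0; apply: (psumr_eq0P (fun l _ => normr_ge0 _) off).
have ek : forall i, i \notin J -> (delta_mx k 0 : 'cV[R]_n) i 0 = 0.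
  by move=> i ni; rewrite mxE andbT (_ : (i == k) = false) //; apply: contraNF ni => /eqP ->.
move/(congr1 (fun M : 'cV[R]_n => M k 0)): (inv_gram_on_gram ek).
rewrite mxE big1 => [|l _]; last by rewrite row0 mul0r.
by rewrite mxE !eqxx => /eqP; rewrite eq_sym oner_eq0.
Qed.

Definition supp (a : 'cV[R]_n) : {set 'I_n} := [set i | a i 0 != 0].

Lemma supp_out (a : 'cV[R]_n) i : i \notin supp a -> a i 0 = 0.
Proof. by rewrite inE negbK => /eqP. Qed.

Definition dominated (a b : 'cV[R]_n) : Prop :=
  forall i, 0 <= a i 0 * b i 0 /\ `|b i 0| <= `|a i 0|.

Lemma dominated_trans a b c : dominated a b -> dominated b c -> dominated a c.
Proof.
move=> ab bc i; have [ab1 ab2] := ab i; have [bc1 bc2] := bc i.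
by split; [apply: same_sign_trans bc2 | apply: le_trans ab2].
Qed.

(* The direction of the lasso path at a KKT point a: d = M_J sgn(a). *)
Definition sgv (a : 'cV[R]_n) : 'cV[R]_n := \col_i Num.sg (a i 0).
Definition dir (a : 'cV[R]_n) : 'cV[R]_n := inv_gram_on (supp a) *m sgv a.

Lemma dirE a i : dir a i 0 = \sum_l inv_gram_on (supp a) i l * Num.sg (a l 0).
Proof. by rewrite /dir [LHS]mxE; apply: eq_bigr => l _; rewrite [sgv a l 0]mxE. Qed.

Lemma dir_out a i : i \notin supp a -> dir a i 0 = 0.
Proof. by move=> ni; rewrite dirE big1 // => l _; rewrite inv_gram_on_row0 // mul0r. Qed.

Lemma dir_gram a i : i \in supp a -> (gram *m dir a) i 0 = Num.sg (a i 0).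
Proof. by move=> iJ; rewrite /dir gram_inv_gram_on // mxE. Qed.

(* Along -d the active coordinates move towards 0 (diagonal dominance of M_J). *)
Lemma dir_sign a i : i \in supp a -> 0 <= Num.sg (a i 0) * dir a i 0.
Proof.
move=> iJ; have ai : a i 0 != 0 by rewrite inE in iJ.
have dom := inv_gram_on_dominant iJ; set M := inv_gram_on (supp a) in dom *.
rewrite dirE -/M (bigD1 i) //= mulrDr mulrCA sg_sqr1 // mulr1.
suff : - \sum_(l | l != i) `|M i l| <= Num.sg (a i 0) * \sum_(l | l != i) M i l * Num.sg (a l 0).
  lra.
rewrite mulr_sumr -sumrN; apply: ler_sum => l _.
rewrite lerNl; apply: le_trans (ler_norm _) _; rewrite normrN !normrM.
apply: le_trans (ler_piMl (mulr_ge0 (normr_ge0 _) (normr_ge0 _)) (normr_sg_le1 _)) _.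
exact: ler_piMr (normr_sg_le1 _).
Qed.

(* Off the support the correlation moves at rate at most 1: diagonal dominance
   of M_(J u {k}) applied to G d, which vanishes outside J u {k}. *)
Lemma dir_gram_off a k : k \notin supp a -> `|(gram *m dir a) k 0| <= 1.
Proof.
move=> nk; set K := supp a :|: [set k]; set M := inv_gram_on K.
have kK : k \in K by rewrite !inE eqxx orbT.
have dK : forall i, i \notin K -> dir a i 0 = 0.
  by move=> i; rewrite !inE negb_or => /andP [ni _]; apply: dir_out; rewrite inE.
move/(congr1 (fun M : 'cV[R]_n => M k 0)): (inv_gram_on_gram dK).
rewrite dir_out // mxE (bigD1 k) //= -/M => E.
set S := \sum_(l | l != k) _ in E.
have Sbound : `|S| <= \sum_(l | l != k) `|M k l|.
  apply: le_trans (ler_norm_sum _ _ _) _; apply: ler_sum => l lk; rewrite normrM.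
  have [lJ|nlJ] := boolP (l \in supp a).
    by rewrite dir_gram //; apply: ler_piMr (normr_sg_le1 _).
  by rewrite inv_gram_on_col0 ?normr0 ?mul0r // in_setU in_set1 negb_or nlJ lk.
have dom := inv_gram_on_dominant kK; have Mk := inv_gram_on_diag_gt0 kK.
have : M k k * `|(gram *m dir a) k 0| = `|S|.
  by rewrite -(gtr0_norm Mk) -normrM -normrN; congr `|_|; lra.
by rewrite -(ler_pM2l Mk) mulr1; lra.
Qed.

Lemma corr_lin (a u : 'cV[R]_n) (d : R) i :
  corr (a - d *: u) i 0 = corr a i 0 + d * (gram *m u) i 0.
Proof. by rewrite /corr mulmxBr -scalemxAr !mxE; ring. Qed.

Lemma kkt_corr_sg t (a : 'cV[R]_n) i : kkt t a -> a i 0 != 0 ->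
  corr a i 0 = t * Num.sg (a i 0).
Proof.
move=> akkt ai; have [_ E] := akkt i.
by apply: (mulIf ai); rewrite E -mulrA -normrEsg.
Qed.

Section Segment.
Variables (t : R) (a : 'cV[R]_n).
Hypotheses (t0 : 0 < t) (akkt : kkt t a).

(* The straight continuation of the path from (t, a). *)
Definition seg (r : R) : 'cV[R]_n := a - (r - t) *: dir a.

Lemma segE r i : seg r i 0 = a i 0 - (r - t) * dir a i 0.
Proof. by rewrite !mxE. Qed.

Lemma seg_out r i : i \notin supp a -> seg r i 0 = 0.
Proof. by move=> ni; rewrite segE supp_out // dir_out // mulr0 subr0. Qed.

Lemma seg_sg r i : Num.sg (a i 0) * seg r i 0 =
  `|a i 0| - (r - t) * (Num.sg (a i 0) * dir a i 0).
Proof. by rewrite segE mulrBr normrEsg; ring. Qed.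

Definition sign_kept (r : R) : Prop :=
  forall i, i \in supp a -> 0 <= Num.sg (a i 0) * seg r i 0.

Lemma seg_kkt r : t <= r -> sign_kept r -> kkt r (seg r).
Proof.
move=> tr kept i; rewrite /seg corr_lin.
have [iJ|niJ] := boolP (i \in supp a).
  have ai : a i 0 != 0 by rewrite inE in iJ.
  rewrite (kkt_corr_sg akkt ai) dir_gram // -mulrDl [t + _]addrC subrK.
  have sg1 := normr_sg1 ai; have r0 : 0 < r by apply: lt_le_trans tr.
  split; first by rewrite normrM sg1 mulr1 gtr0_norm.
  rewrite -/(seg r) -mulrA; congr (_ * _).
  by rewrite -[RHS]mul1r -sg1 -normrM ger0_norm //; apply: kept.
have [gb _] := akkt i; have slope := dir_gram_off niJ.
rewrite -/(seg r) seg_out // mulr0 normr0 mulr0; split => //.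
apply: le_trans (ler_normD _ _) _; rewrite normrM ger0_norm ?subr_ge0 //.
have : (r - t) * `|(gram *m dir a) i 0| <= (r - t) * 1 by rewrite ler_wpM2l ?subr_ge0.
lra.
Qed.

Lemma seg_dominated r : t <= r -> sign_kept r -> dominated a (seg r).
Proof.
move=> tr kept i.
have [iJ|niJ] := boolP (i \in supp a); last first.
  by rewrite seg_out // supp_out // mul0r normr0 lexx.
have ai : a i 0 != 0 by rewrite inE in iJ.
have sg1 := normr_sg1 ai; have ki := kept i iJ; have di := dir_sign iJ.
split.
  have -> : a i 0 * seg r i 0 = `|a i 0| * (Num.sg (a i 0) * seg r i 0).
    by rewrite {1}(numEsg (a i 0)); ring.
  by rewrite mulr_ge0.
rewrite -[`|seg r i 0|]mul1r -sg1 -normrM ger0_norm // seg_sg.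
have : 0 <= (r - t) * (Num.sg (a i 0) * dir a i 0) by rewrite mulr_ge0 // subr_ge0.
lra.
Qed.

Lemma first_zero_crossing s : t <= s -> ~ sign_kept s ->
  exists r, [/\ t < r, r <= s, sign_kept r & exists2 i, i \in supp a & seg r i 0 = 0].
Proof.
move=> ts broken.
(* w i is the rate at which |a_i| decreases, tau i the parameter where a_i hits
   0; the crossing coordinates D all have w i > 0, and r is their least tau. *)
pose w i := Num.sg (a i 0) * dir a i 0.
pose D := [pred i | (i \in supp a) && (Num.sg (a i 0) * seg s i 0 < 0)].
pose tau i := t + `|a i 0| / w i.
have [i0 Di0] : exists i0, D i0.
  apply/existsP; apply: contra_notT broken => /existsPn nD i iJ.
  by move: (nD i); rewrite /= iJ /= -leNgt.
have a_gt0 i : i \in supp a -> 0 < `|a i 0| by rewrite inE normr_gt0.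
have Dw i : D i -> 0 < w i /\ `|a i 0| < (s - t) * w i.
  move=> /andP [iJ neg]; have ai := a_gt0 i iJ; rewrite seg_sg -/(w i) in neg.
  split; last by lra.
  rewrite ltNge; apply/negP => wi.
  have : (s - t) * w i <= 0 by rewrite mulr_ge0_le0 // subr_ge0.
  lra.
case: (arg_minP tau Di0) => im Dim im_min.
have [wim aim] := Dw im Dim; have imJ : im \in supp a by case/andP: Dim.
set r := tau im.
have rt : (r - t) * w im = `|a im 0|.
  by rewrite /r /tau addrAC subrr add0r mulrAC -mulrA mulfV ?gt_eqF // mulr1.
have tr : t < r by rewrite /r /tau ltrDl divr_gt0 // a_gt0.
have rs : r <= s.
  by rewrite -(lerD2r (- t)) -/(r - t) -/(s - t) -(ler_pM2r wim) rt; lra.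
exists r; split => //; last first.
  exists im => //; have ai : a im 0 != 0 by rewrite inE in imJ.
  have : Num.sg (a im 0) * seg r im 0 = 0 by rewrite seg_sg -/(w im) rt subrr.
  by move/eqP; rewrite mulf_eq0 sgr_eq0 (negbTE ai) => /eqP.
move=> i iJ; rewrite seg_sg -/(w i); have ai := a_gt0 i iJ.
have [wi|wi] := lerP (w i) 0.
  have : (r - t) * w i <= 0 by rewrite mulr_ge0_le0 // subr_ge0 ltW.
  lra.
have [Di|nDi] := boolP (D i).
  have : r - t <= `|a i 0| / w i by have := im_min i Di; rewrite -/r /tau => h; lra.
  by rewrite ler_pdivlMr //; lra.
have : 0 <= Num.sg (a i 0) * seg s i 0.
  by rewrite leNgt; apply: contraNN nDi => neg; rewrite /= iJ neg.
rewrite seg_sg -/(w i) => ok_s.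
have : (r - t) * w i <= (s - t) * w i by apply: ler_wpM2r; [exact: ltW | lra].
lra.
Qed.

(* The segment never activates new coordinates, so a zero crossing at an active
   coordinate strictly shrinks the support. *)
Lemma seg_supp_shrink r i : i \in supp a -> seg r i 0 = 0 ->
  (#|supp (seg r)| < #|supp a|)%N.
Proof.
move=> iJ si; apply: proper_card; apply/properP; split.
  by apply/subsetP => j; rewrite inE; apply: contraR => nj; rewrite seg_out.
by exists i => //; rewrite inE si eqxx.
Qed.

End Segment.

Variable x : R -> 'cV[R]_n.
Hypothesis x_min : forall lam : R, 0 < lam -> is_lasso_minimizer T y lam (x lam).

Definition sol (t : R) : 'cV[R]_n := x t^-1.

Lemma sol_kkt t : 0 < t -> kkt t (sol t).
Proof.
move=> t0; rewrite -[X in kkt X]invrK.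
by apply: minimizer_kkt; [| apply: x_min]; rewrite invr_gt0.
Qed.

Lemma sol_unique t c : 0 < t -> kkt t c -> sol t = c.
Proof.
by move=> t0 ckkt; apply: (kkt_minimizer_unique t0 ckkt); apply: x_min; rewrite invr_gt0.
Qed.

Lemma sol_segment_step t s : 0 < t -> t <= s -> exists r, [/\ t <= r, r <= s,
  dominated (sol t) (sol r) & r = s \/ (#|supp (sol r)| < #|supp (sol t)|)%N].
Proof.
move=> t0 ts; have akkt := sol_kkt t0.
have on_seg r : t <= r -> sign_kept t (sol t) r ->
    sol r = seg t (sol t) r /\ dominated (sol t) (sol r).
  move=> tr kept; have -> := sol_unique (lt_le_trans t0 tr) (seg_kkt t0 akkt tr kept).
  by split => //; apply: seg_dominated.
have [kept|broken] := boolP [forall i in supp (sol t),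
                              0 <= Num.sg (sol t i 0) * seg t (sol t) s i 0].
  have [_ dom] := on_seg s ts (fun i iJ => forall_inP kept i iJ).
  by exists s; split => //; left.
have [r [tr rs kept [i iJ si]]] := first_zero_crossing ts (fun kept =>
    negP broken (introT forall_inP kept)).
have [solr dom] := on_seg r (ltW tr) kept.
exists r; split => //; [exact: ltW | right].
by rewrite solr; apply: seg_supp_shrink si.
Qed.

Lemma sol_dominated k t s : 0 < t -> (#|supp (sol t)| <= k)%N -> t <= s ->
  dominated (sol t) (sol s).
Proof.
elim: k t => [|k IHk] t t0 tk ts;
  have [r [tr rs dom [<- //|shrink]]] := sol_segment_step t0 ts.
  by move: (leq_trans shrink tk).
apply: (dominated_trans dom); apply: IHk rs; first exact: lt_le_trans tr.
by rewrite -ltnS; apply: leq_trans shrink tk.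
Qed.

End Lasso.

Unset Implicit Arguments.

Theorem mainTheorem18 (R : realType) (m n : nat) (T : 'M[R]_(m, n)) (y : 'cV[R]_m)
    (x : R -> 'cV[R]_n)
    (T_inj : injective (@mulmx R m n 1 T))
    (T_pcc : positive_cone_condition T)
    (x_min : forall lam : R, 0 < lam -> is_lasso_minimizer T y lam (x lam)) :
  forall lam : R, 0 < lam ->
    forall i : 'I_n, x lam i 0 != 0 ->
      forall mu : R, 0 < mu -> mu <= lam ->
        `|x mu i 0| <= `|x lam i 0|.
Proof.
move=> lam lam0 i _ mu mu0 mu_le.
have t0 : 0 < lam^-1 by rewrite invr_gt0.
have ts : lam^-1 <= mu^-1 by rewrite lef_pV2 ?posrE.
have := sol_dominated T_inj T_pcc x_min t0 (leqnn _) ts i.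
by rewrite /sol !invrK => -[].
Qed.
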